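(* Let $\mathbb{A},\mathbb{B}$ be real square matrices of the same size such that $\mathbb{A}$ is symmetric positive definite and $\mathbb{A}\mathbb{B}$ is skew-symmetric. Then every eigenvalue of $\mathbb{A}+\mathbb{B}$ is either a positive real number or a non-real complex number with positive real part. In particular, $\mathbb{A}+\mathbb{B}$ is invertible. *)

From HB Require Import structures.
From mathcomp Require Import all_boot all_order all_algebra.
From mathcomp Require Import reals.
From mathcomp.real_closed Require Import complex.
Set Implicit Arguments. Unset Strict Implicit. Unset Printing Implicit Defensive.
Import Order.TTheory GRing.Theory Num.Theory.
Local Open Scope ring_scope.

Definition sym_posdef (R : realType) (n : nat) (A : 'M[R]_n) : Prop :=
  A^T = A /\ forall v : 'rV[R]_n, v != 0 -> 0 < (v *m A *m v^T) 0 0.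

Definition skew_sym (R : realType) (n : nat) (M : 'M[R]_n) : Prop :=
  M^T = - M.

Definition ceigenvalue (R : realType) (n : nat) (M : 'M[R]_n) (z : R[i]) : bool :=
  eigenvalue (map_mx (real_complex R) M) z.

(* Let M = A + B and M v = z v with v a nonzero complex vector, and write
   v^* for its conjugate transpose.  Since A M = A^2 + A B, we get
   v^* A^2 v + v^* (A B) v = z (v^* A v).  The form v^* A v is real and
   positive, and so is v^* A^2 v because A^2 = A^T A is again positive
   definite, whereas v^* (A B) v is purely imaginary because A B is skew.
   Taking real parts gives Re z > 0; invertibility follows since 0 is then
   not an eigenvalue. *)
From HB Require Import structures.
From mathcomp Require Import all_boot all_order all_algebra.
From mathcomp Require Import reals ring.
From mathcomp.real_closed Require Import complex.
Set Implicit Arguments. Unset Strict Implicit. Unset Printing Implicit Defensive.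
Import Order.TTheory GRing.Theory Num.Theory.
Local Open Scope ring_scope.

Local Notation bform S u w := ((u *m S *m w^T) 0 0).

Lemma eigenvalue_trmx (F : fieldType) n (M : 'M[F]_n) a :
  eigenvalue M^T a = eigenvalue M a.
Proof.
rewrite !eigenvalue_root_char; congr (root _ a).
rewrite /char_poly -[RHS]det_tr; congr (\det _).
by rewrite /char_poly_mx linearB /= tr_scalar_mx map_trmx.
Qed.

Lemma bform_trmx (R : comNzRingType) n (S : 'M[R]_n) (u w : 'rV[R]_n) :
  bform S u w = bform S^T w u.
Proof.
have -> (M : 'M[R]_1) : M 0 0 = M^T 0 0 by rewrite mxE.
by rewrite !trmx_mul trmxK mulmxA.
Qed.

Lemma bform_skew0 (R : numDomainType) n (S : 'M[R]_n) (u : 'rV[R]_n) :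
  S^T = - S -> bform S u u = 0.
Proof.
move=> skS; have /eqP : bform S u u = - bform S u u.
  by rewrite {1}bform_trmx skS mulmxN mulNmx mxE.
by rewrite -subr_eq0 opprK -mulr2n mulrn_eq0 => /eqP.
Qed.

Lemma mulmx_trmx_gt0 (R : realDomainType) n (u : 'rV[R]_n) :
  u != 0 -> 0 < (u *m u^T) 0 0.
Proof.
move=> u0; have [j uj0] : exists j, u 0 j != 0.
  apply/existsP; apply: contraNT u0 => /existsPn u0.
  by apply/eqP/rowP => j; rewrite mxE; apply/eqP/negbNE/u0.
rewrite mxE (bigD1 j) //= mxE ltr_wpDr ?sumr_ge0 // => [i _|].
  by rewrite mxE -expr2 sqr_ge0.
by rewrite -expr2 exprn_even_gt0 // uj0 orbT.
Qed.

Lemma sym_posdef_mulmx_self (R : realType) n (A : 'M[R]_n) :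
  sym_posdef A -> sym_posdef (A *m A).
Proof.
case=> sA pA; split=> [|u u0]; first by rewrite trmx_mul sA.
have uA0 : u *m A != 0.
  by apply: contraTneq (pA u u0) => ->; rewrite mul0mx mxE ltxx.
by rewrite mulmxA -mulmxA -{2}sA -trmx_mul mulmx_trmx_gt0.
Qed.

Section HermitianForm.
Variable R : rcfType.
Local Notation rcmx := (map_mx (real_complex R)).

Definition herm_form n (S : 'M[R]_n) (v : 'rV[R[i]]_n) : R[i] :=
  (map_mx conjc v *m rcmx S *m v^T) 0 0.

Lemma herm_formE n (S : 'M[R]_n) (v : 'rV[R[i]]_n) :
  let a := map_mx (@complex.Re R) v in let b := map_mx (@complex.Im R) v in
  herm_form S v =
    ((bform S a a + bform S b b)%R +i* (bform S a b - bform S b a)%R)%C.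
Proof.
move=> a b.
have v_split : v = rcmx a + 'i%C *: rcmx b.
  by apply/matrixP => i j; rewrite !mxE; exact: complexE.
have cv_split : map_mx conjc v = rcmx a - 'i%C *: rcmx b.
  apply/matrixP => i j; rewrite !mxE; case: (v i j) => x y /=.
  by apply/eqP; rewrite eq_complex /=; apply/andP; split; apply/eqP; ring.
have rc_bform x y : rcmx x *m rcmx S *m (rcmx y)^T = rcmx (x *m S *m y^T).
  by rewrite map_trmx -!map_mxM.
rewrite /herm_form cv_split [in X in X^T]v_split linearD /=.
rewrite !mulmxDl !mulmxDr !mulNmx -!scalemxAl linearZ /= -!scalemxAr !rc_bform.
rewrite !mxE; move: (\sum_j _) (\sum_j _) (\sum_j _) (\sum_j _) => p q r s.
by apply/eqP; rewrite eq_complex /=; apply/andP; split; apply/eqP; ring.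
Qed.

Lemma herm_formDl n (S T : 'M[R]_n) (v : 'rV[R[i]]_n) :
  herm_form (S + T) v = herm_form S v + herm_form T v.
Proof. by rewrite /herm_form map_mxD mulmxDr mulmxDl mxE. Qed.

Lemma herm_form_eigen n (S M : 'M[R]_n) (v : 'rV[R[i]]_n) (z : R[i]) :
  v *m (rcmx M)^T = z *: v -> herm_form (S *m M) v = z * herm_form S v.
Proof.
move=> ev; have evT : rcmx M *m v^T = z *: v^T.
  by rewrite -[LHS]trmxK trmx_mul trmxK ev linearZ.
by rewrite /herm_form map_mxM -!mulmxA evT -!scalemxAr mxE !mulmxA.
Qed.

Lemma Re_herm_form_skew n (S : 'M[R]_n) (v : 'rV[R[i]]_n) :
  S^T = - S -> complex.Re (herm_form S v) = 0.
Proof. by move=> skS; rewrite herm_formE /= !bform_skew0 ?addr0. Qed.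

Lemma Im_herm_form_sym n (S : 'M[R]_n) (v : 'rV[R[i]]_n) :
  S^T = S -> complex.Im (herm_form S v) = 0.
Proof. by move=> sS; rewrite herm_formE /= [X in X - _]bform_trmx sS subrr. Qed.

Lemma Re_herm_form_gt0 n (S : 'M[R]_n) (v : 'rV[R[i]]_n) :
  (forall u : 'rV[R]_n, u != 0 -> 0 < bform S u u) ->
  v != 0 -> 0 < complex.Re (herm_form S v).
Proof.
move=> pS v0; rewrite herm_formE /=.
set a := map_mx _ v; set b := map_mx _ v.
have bform_ge0 (u : 'rV[R]_n) : 0 <= bform S u u.
  have [->|u0] := eqVneq u 0; [by rewrite !mul0mx mxE | exact/ltW/pS].
have [b0|b0] := eqVneq b 0; last exact: ltr_wpDl (bform_ge0 a) (pS b b0).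
suff a0 : a != 0 by exact: ltr_wpDr (bform_ge0 b) (pS a a0).
apply: contra_neq v0 => a0; apply/matrixP => i j.
move/matrixP: a0 => /(_ i j); move/matrixP: b0 => /(_ i j).
by rewrite !mxE; case: (v i j) => x y /= -> ->.
Qed.

End HermitianForm.

Lemma ceigenvalue_Re_gt0 (R : realType) n (A B : 'M[R]_n) (z : R[i]) :
  sym_posdef A -> skew_sym (A *m B) -> ceigenvalue (A + B) z ->
  0 < complex.Re z.
Proof.
(* [eigenvalue] is about row eigenvectors, the forms need a column one. *)
move=> posA skAB; rewrite /ceigenvalue -eigenvalue_trmx.
case/eigenvalueP => v ev v0.
have := herm_form_eigen A ev; rewrite mulmxDr herm_formDl.
have := Re_herm_form_gt0 (sym_posdef_mulmx_self posA).2 v0.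
have := Re_herm_form_skew v skAB.
have := Im_herm_form_sym v posA.1.
have := Re_herm_form_gt0 posA.2 v0.
move: (herm_form A v) (herm_form (A *m A) v) (herm_form (A *m B) v) z {ev}.
move=> [p q] [a b] [c d] [x y] /= p_gt0 q0 c0 a_gt0 [+ _].
rewrite q0 c0 addr0 mulr0 subr0 => a_eq.
by rewrite -(pmulr_lgt0 _ p_gt0) -a_eq.
Qed.

Theorem lemma4p1 (R : realType) (n : nat) (A B : 'M[R]_n) :
  sym_posdef A -> skew_sym (A *m B) ->
  (forall z : R[i], ceigenvalue (A + B) z ->
     (complex.Im z = 0 /\ 0 < complex.Re z) \/
     (complex.Im z != 0 /\ 0 < complex.Re z)) /\
  (A + B) \in unitmx.
Proof.
move=> posA skAB; have Re_gt0 := ceigenvalue_Re_gt0 posA skAB.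
split=> [z /Re_gt0 z_gt0|].
  by case: (eqVneq (complex.Im z) 0); [left|right].
rewrite -(map_unitmx (real_complex R)) unitmxE unitfE; apply: contraT => /negbNE.
case/det0P => v v0 v_ker; have /Re_gt0 : ceigenvalue (A + B) 0.
  by apply/eigenvalueP; exists v; rewrite ?scale0r.
by rewrite ltxx.
Qed.
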